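(* Let $m,n\ge 1$ and let $D,E$ be linear subspaces of $M_{m\times n}$ such that $\sigma(D,E)=\operatorname{conv}(\Phi_D\cup\Phi^E)$ is a proper face of the cone $\mathbb{D}$ of decomposable maps, and such that every interior point of $\sigma(D,E)$ is an interior point of the cone $\mathbb{P}_1$ of positive linear maps $M_m\to M_n$. Then every nonzero element $A$ of $$\sigma(D,E)'=\{A\in\mathbb{T}:\ \langle A,\phi\rangle=0 \text{ for every }\phi\in\sigma(D,E)\}$$ belongs to $\mathbb{T}\setminus\mathbb{V}_1$.
   Context: $M_k$ denotes complex $k\times k$ matrices and $M_{m\times n}$ complex $m\times n$ matrices; $X^{\mathrm t}$ is the transpose. A linear map $\phi:M_m\to M_n$ is positive if it maps positive semi-definite matrices to positive semi-definite matrices; $\mathbb{P}_1$ is the cone of positive maps. For a finite set $\mathcal V=\{V_1,\dots,V_\nu\}\subset M_{m\times n}$ put $\phi_{\mathcal V}(X)=\sum_i V_i^*XV_i$ and $\phi^{\mathcal V}(X)=\sum_i V_i^*X^{\mathrm t}V_i$. The cone of decomposable maps is $\mathbb{D}=\{\phi_{\mathcal V}+\phi^{\mathcal W}\}$ (over all finite $\mathcal V,\mathcal W\subset M_{m\times n}$). For a subspace $D\subset M_{m\times n}$, $\Phi_D=\{\phi_{\mathcal V}:\operatorname{span}\mathcal V\subset D\}$ and $\Phi^E=\{\phi^{\mathcal V}:\operatorname{span}\mathcal V\subset E\}$. A point $x$ of a convex set $C$ is an interior point of $C$ if for every $y\in C$ there is $t>1$ with $(1-t)y+tx\in C$. Identify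 $M_n\otimes M_m$ with $m\times m$ block matrices $A=\sum_{i,j=1}^m a_{ij}\otimes e_{ij}$ with blocks $a_{ij}\in M_n$; the partial transpose is $A^\tau=\sum_{i,j}a_{ji}\otimes e_{ij}$. $\mathbb{T}$ is the cone of $A\in M_n\otimes M_m$ with both $A$ and $A^\tau$ positive semi-definite. For $z\in M_{m\times n}$ with rows $z_1,\dots,z_m\in\mathbb C^n$ (as column vectors), $\tilde z\tilde z^*$ is the block matrix whose $(i,j)$ block is $z_iz_j^*$; $\mathbb{V}_1$ is the convex cone generated by $\{\tilde z\tilde z^*: \operatorname{rank} z\le 1\}$ (the separable cone). The bilinear pairing is $\langle A,\phi\rangle=\sum_{i,j=1}^m\operatorname{Tr}\big(a_{ij}\,\phi(e_{ij})^{\mathrm t}\big)$ for $A=\sum a_{ij}\otimes e_{ij}$ and $\phi:M_m\to M_n$ linear, where $e_{ij}$ are the matrix units of $M_m$. *)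

From HB Require Import structures.
From mathcomp Require Import all_boot all_order all_algebra.
From mathcomp Require Import reals complex.
From Stdlib Require List.
Set Implicit Arguments. Unset Strict Implicit. Unset Printing Implicit Defensive.
Import Order.TTheory GRing.Theory Num.Theory.
Local Open Scope ring_scope.

Section Defs.
Variable C : numClosedFieldType.

Definition adj {p q : nat} (M : 'M[C]_(p, q)) : 'M[C]_(q, p) := (map_mx Num.conj M)^T.

Definition psd {k : nat} (M : 'M[C]_k) : Prop :=
  forall x : 'cV[C]_k, 0 <= (adj x *m M *m x) 0 0.

Definition mapT (m n : nat) := 'M[C]_m -> 'M[C]_n.

Definition positive_map {m n : nat} (phi : mapT m n) : Prop :=
  forall X : 'M[C]_m, psd X -> psd (phi X).

Definition P1 {m n : nat} (phi : mapT m n) : Prop :=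
  linear phi /\ positive_map phi.

Definition phi_low {m n : nat} (V : seq 'M[C]_(m, n)) : mapT m n :=
  fun X => \sum_(v <- V) adj v *m X *m v.
Definition phi_up {m n : nat} (V : seq 'M[C]_(m, n)) : mapT m n :=
  fun X => \sum_(v <- V) adj v *m X^T *m v.

Definition Dec {m n : nat} (phi : mapT m n) : Prop :=
  exists V W : seq 'M[C]_(m, n), forall X, phi X = phi_low V X + phi_up W X.

Definition PhiD {m n : nat} (D : {vspace 'M[C]_(m, n)}) (phi : mapT m n) : Prop :=
  exists V : seq 'M[C]_(m, n), all (fun v => v \in D) V /\ forall X, phi X = phi_low V X.
Definition PhiE {m n : nat} (E : {vspace 'M[C]_(m, n)}) (phi : mapT m n) : Prop :=
  exists V : seq 'M[C]_(m, n), all (fun v => v \in E) V /\ forall X, phi X = phi_up V X.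

Definition comb {m n : nat} (t : C) (y x : mapT m n) : mapT m n :=
  fun X => (1 - t) *: y X + t *: x X.

Definition conv {m n : nat} (S : mapT m n -> Prop) (phi : mapT m n) : Prop :=
  exists l : seq (C * mapT m n),
    (forall p, List.In p l -> 0 <= p.1 /\ S p.2) /\
    \sum_(p <- l) p.1 = 1 /\
    forall X, phi X = \sum_(p <- l) p.1 *: p.2 X.

Definition sigmaDE {m n : nat} (D E : {vspace 'M[C]_(m, n)}) : mapT m n -> Prop :=
  conv (fun phi => PhiD D phi \/ PhiE E phi).

(* extensional membership (sets of maps are considered up to pointwise equality) *)
Definition convex_set {m n : nat} (S : mapT m n -> Prop) : Prop :=
  forall x y t, S x -> S y -> 0 <= t -> t <= 1 -> S (comb t x y).

Definition face {m n : nat} (F K : mapT m n -> Prop) : Prop :=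
  (forall x, F x -> K x) /\ convex_set F /\
  forall x y t, K x -> K y -> 0 < t -> t < 1 -> F (comb t x y) -> F x /\ F y.

Definition proper_face {m n : nat} (F K : mapT m n -> Prop) : Prop :=
  face F K /\ exists x, K x /\ ~ F x.

Definition interior_point {m n : nat} (K : mapT m n -> Prop) (x : mapT m n) : Prop :=
  K x /\ forall y, K y -> exists t : C, 1 < t /\ K (comb t y x).

(* elements of M_n (x) M_m as m x m block matrices with n x n blocks *)
Definition blockT (m n : nat) := 'M['M[C]_n]_m.

Definition full {m n : nat} (A : blockT m n) :=
  \mxblock_(i < m, j < m) A i j.

(* partial transpose: (i,j) block of A^tau is a_{ji} *)
Definition ptrans {m n : nat} (A : blockT m n) : blockT m n := A^T.

Definition Tcone {m n : nat} (A : blockT m n) : Prop :=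
  psd (full A) /\ psd (full (ptrans A)).

(* z~ z~^* : (i,j) block is z_i z_j^*, z_i = i-th row of z as a column vector *)
Definition ztilde {m n : nat} (z : 'M[C]_(m, n)) : blockT m n :=
  \matrix_(i < m, j < m) ((row i z)^T *m adj ((row j z)^T)).

Definition V1 {m n : nat} (A : blockT m n) : Prop :=
  exists l : seq (C * 'M[C]_(m, n)),
    (forall p, List.In p l -> 0 <= p.1 /\ (\rank p.2 <= 1)%N) /\
    A = \sum_(p <- l) map_mx (fun M => p.1 *: M) (ztilde p.2).

Definition pairing {m n : nat} (A : blockT m n) (phi : mapT m n) : C :=
  \sum_(i < m) \sum_(j < m) \tr (A i j *m (phi (delta_mx i j))^T).

Definition dual_face {m n : nat} (S : mapT m n -> Prop) (A : blockT m n) : Prop :=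
  Tcone A /\ forall phi, S phi -> pairing A phi = 0.

End Defs.

From HB Require Import structures.
From mathcomp Require Import all_boot all_order all_algebra.
From mathcomp Require Import reals complex.
Set Implicit Arguments. Unset Strict Implicit. Unset Printing Implicit Defensive.
Import Order.TTheory GRing.Theory Num.Theory.
Local Open Scope ring_scope.

(* Let phi0 = phi_(vbasis D) + phi^(vbasis E).  Every element of sigma(D,E) is
   phi_V + phi^W with V in D and W in E.  Writing v in V in the basis of D as
   v = \sum_j x_j, the Lagrange identity
     \sum_(j,l) (x_j - x_l)^* X (x_j - x_l)
       = 2 d \sum_j x_j^* X x_j - 2 v^* X v
   shows that t phi_(vbasis D) - e phi_V lies in Phi_D as soon as t >= e N for
   some N depending on V; hence phi0 is an interior point of sigma(D,E), and by
   hypothesis one of P1.  A nonzero separable A pairs nonnegatively with every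
   positive map and strictly positively with the trace map X |-> tr X 1, so if
   A annihilates sigma(D,E) then pairing it with the positive map
   (1 - t) tr + t phi0, t > 1, gives (1 - t) <A, tr> < 0. *)

Section Adjoint.
Variable C : numClosedFieldType.

Lemma adjB p q : {morph @adj C p q : A B / A - B}.
Proof. by move=> A B; apply/matrixP=> i j; rewrite !mxE rmorphB. Qed.

HB.instance Definition _ p q :=
  GRing.isZmodMorphism.Build 'M[C]_(p, q) 'M[C]_(q, p) (@adj C p q) (@adjB p q).

Lemma adjZ p q c (A : 'M[C]_(p, q)) : adj (c *: A) = c^* *: adj A.
Proof. by apply/matrixP=> i j; rewrite !mxE rmorphM. Qed.

Lemma adjK p q (A : 'M[C]_(p, q)) : adj (adj A) = A.
Proof. by apply/matrixP=> i j; rewrite !mxE conjCK. Qed.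

Lemma adjM p q r (A : 'M[C]_(p, q)) (B : 'M[C]_(q, r)) : adj (A *m B) = adj B *m adj A.
Proof. by rewrite /adj map_mxM trmx_mul. Qed.

Lemma adj_trmx p q (A : 'M[C]_(p, q)) : adj A^T = (adj A)^T.
Proof. by apply/matrixP=> i j; rewrite !mxE. Qed.

End Adjoint.

Lemma biadditive_lagrange (U W : zmodType) (q : U -> U -> W) k (x : 'I_k -> U) :
    (forall w, {morph q^~ w : u v / u - v}) -> (forall u, {morph q u : v w / v - w}) ->
  \sum_j \sum_l q (x j - x l) (x j - x l) =
  (\sum_j q (x j) (x j)) *+ k.*2 - q (\sum_j x j) (\sum_j x j) *+ 2.
Proof.
move=> qBl qBr.
pose ql w : {additive U -> W} :=
  HB.pack (q^~ w) (GRing.isZmodMorphism.Build _ _ _ (qBl w)).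
pose qr u : {additive U -> W} :=
  HB.pack (q u) (GRing.isZmodMorphism.Build _ _ _ (qBr u)).
have sq_sub j l : q (x j - x l) (x j - x l) =
    q (x j) (x j) + q (x l) (x l) - (q (x j) (x l) + q (x l) (x j)).
  by rewrite qBl !qBr opprB addrACA opprD.
have sq_sum : q (\sum_j x j) (\sum_j x j) = \sum_j \sum_l q (x j) (x l).
  transitivity (\sum_j q (x j) (\sum_l x l)); first exact: (raddf_sum (ql _)).
  by apply: eq_bigr => j _; exact: (raddf_sum (qr _)).
rewrite sq_sum.
under eq_bigr => j _ do
    rewrite (eq_bigr _ (fun l _ => sq_sub j l)) sumrB !big_split /= sumr_const card_ord.
rewrite sumrB !big_split /= sumr_const card_ord.
by rewrite [X in _ - (_ + X)]exchange_big /= -mulr2n sumrMnl -mulrnDr addnn.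
Qed.

Section DecomposableCones.
Variables (C : numClosedFieldType) (m n : nat).
Implicit Types (D E : {vspace 'M[C]_(m, n)}) (V : seq 'M[C]_(m, n)) (f g : mapT C m n).

Lemma conjC_sqrtC_mul (c : C) : 0 <= c -> (sqrtC c)^* * sqrtC c = c.
Proof.
by move=> c_ge0; rewrite conj_Creal ?ger0_real ?sqrtC_ge0 // -expr2 sqrtCK.
Qed.

Lemma PhiD_eq D f g : (forall X, f X = g X) -> PhiD D g -> PhiD D f.
Proof. by move=> fg [V [VD gV]]; exists V; split=> // X; rewrite fg gV. Qed.

Lemma PhiD0 D : PhiD D (fun _ => 0).
Proof. by exists [::]; split=> // X; rewrite /phi_low big_nil. Qed.

Lemma PhiD_add D f g : PhiD D f -> PhiD D g -> PhiD D (fun X => f X + g X).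
Proof.
move=> [V [VD fV]] [W [WD gW]]; exists (V ++ W); split; first by rewrite all_cat VD.
by move=> X; rewrite fV gW /phi_low big_cat.
Qed.

Lemma PhiD_sum D I (r : seq I) (F : I -> mapT C m n) :
  (forall i, PhiD D (F i)) -> PhiD D (fun X => \sum_(i <- r) F i X).
Proof.
move=> DF; elim: r => [|i r IHr].
  by apply: PhiD_eq (PhiD0 D) => X; rewrite big_nil.
by apply: PhiD_eq (PhiD_add (DF i) IHr) => X; rewrite big_cons.
Qed.

Lemma PhiD_scale D c f : 0 <= c -> PhiD D f -> PhiD D (fun X => c *: f X).
Proof.
move=> c_ge0 [V [VD fV]]; exists [seq sqrtC c *: v | v <- V]; split.
  by apply/allP=> _ /mapP[v vV ->]; rewrite memvZ // (allP VD).
move=> X; rewrite fV /phi_low big_map scaler_sumr; apply: eq_bigr => v _.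
by rewrite adjZ -!scalemxAl -scalemxAr scalerA conjC_sqrtC_mul.
Qed.

Lemma PhiD_sq D v : v \in D -> PhiD D (fun X => adj v *m X *m v).
Proof.
by move=> vD; exists [:: v]; rewrite /= vD; split=> // X; rewrite /phi_low big_seq1.
Qed.

Lemma PhiE_PhiD E g : PhiE E g <-> PhiD E (fun X => g X^T).
Proof.
split=> [[V [VE gV]] | [V [VE gV]]]; exists V; split=> // X.
  by rewrite gV /phi_up trmxK.
by rewrite -{1}[X]trmxK gV.
Qed.

Lemma sigmaDE_add D E f g h :
  PhiD D f -> PhiE E g -> (forall X, h X = f X + g X) -> sigmaDE D E h.
Proof.
(* [f + g] is the midpoint of [2 f] and [2 g]. *)
move=> Df /PhiE_PhiD Eg hfg; have two_gt0 : (0 : C) < 2 by rewrite ltr0n.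
pose twice k : mapT C m n := fun X => 2 *: k X.
have twiceK k X : (2 : C)^-1 *: twice k X = k X.
  by rewrite scalerA mulVf ?pnatr_eq0 ?scale1r.
exists [:: ((2 : C)^-1, twice f); (2^-1, twice g)]; split.
  move=> p [<- | [<- | //]]; split; rewrite ?invr_ge0 ?ltW //.
    by left; apply: PhiD_scale; rewrite ?ltW.
  by right; apply/PhiE_PhiD; apply: PhiD_scale; rewrite ?ltW.
split.
  by rewrite !big_cons big_nil addr0 /= -mulr2n -(mulr_natr (2^-1 : C) 2) mulVf ?pnatr_eq0.
by move=> X; rewrite hfg !big_cons big_nil addr0 /= !twiceK.
Qed.

Lemma sigmaDE_decomp D E y : sigmaDE D E y ->
  exists f g, [/\ PhiD D f, PhiE E g & forall X, y X = f X + g X].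
Proof.
case=> l [lS [_ yl]].
suff [f [g [Df Eg fg]]] : exists f g,
    [/\ PhiD D f, PhiE E g & forall X, \sum_(p <- l) p.1 *: p.2 X = f X + g X].
  by exists f, g; split=> // X; rewrite yl fg.
elim: l lS {yl} => [|p l IHl] lS.
  exists (fun _ => 0), (fun _ => 0); split; rewrite ?PhiE_PhiD; try exact: PhiD0.
  by move=> X; rewrite big_nil addr0.
have [f [g [Df Eg fg]]] := IHl (fun q lq => lS q (or_intror lq)).
have [p1_ge0 [Dp | Ep]] := lS p (or_introl erefl).
- exists (fun X => p.1 *: p.2 X + f X), g; split=> //.
    exact: PhiD_add (PhiD_scale p1_ge0 Dp) Df.
  by move=> X; rewrite big_cons fg addrA.
- exists f, (fun X => p.1 *: p.2 X + g X); split=> //.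
    by apply/PhiE_PhiD; apply: PhiD_add (PhiD_scale p1_ge0 _) _; apply/PhiE_PhiD.
  by move=> X; rewrite big_cons fg addrCA.
Qed.

End DecomposableCones.

Section OrderUnit.
Variables (C : numClosedFieldType) (m n : nat) (D : {vspace 'M[C]_(m, n)}).
Local Notation d := (\dim D).
Let b (j : 'I_d) := (vbasis D)`_j.
Let c v (j : 'I_d) : C := coord (vbasis D) j v.

Lemma vbasis_nth_mem j : b j \in D.
Proof. by apply: vbasis_mem; apply: mem_nth; rewrite size_tuple. Qed.

Lemma PhiD_vbasis_sub_sq v e : v \in D -> 0 <= e ->
  PhiD D (fun X => \sum_j (e * d%:R * `|c v j| ^+ 2) *: (adj (b j) *m X *m b j)
                   - e *: (adj v *m X *m v)).
Proof.
move=> vD e_ge0; pose x j := c v j *: b j.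
have xD j l : x j - x l \in D by rewrite memvB ?memvZ ?vbasis_nth_mem.
have half_ge0 : 0 <= e / 2 by rewrite divr_ge0 ?ler0n.
apply: PhiD_eq (PhiD_scale half_ge0 (PhiD_sum (index_enum 'I_d) (fun j =>
  PhiD_sum (index_enum 'I_d) (fun l => PhiD_sq (xD j l))))).
move=> X; have := biadditive_lagrange (q := fun u w => adj u *m X *m w) x.
rewrite /= => -> //; last 2 first.
- by move=> w u u'; rewrite [adj _]raddfB !mulmxBl.
- by move=> u w w'; rewrite mulmxBr.
have -> : \sum_j x j = v by rewrite [RHS](coord_vbasis vD).
have half_twice k : e / 2 * k.*2%:R = e * k%:R.
  by rewrite -muln2 natrM mulrCA divfK ?pnatr_eq0 // mulrC.
rewrite scalerBr -!scaler_nat !scalerA half_twice (half_twice 1) mulr1 scaler_sumr.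
congr (_ - _); apply: eq_bigr => j _.
by rewrite /x adjZ -scalemxAr -!scalemxAl !scalerA normCK mulrA.
Qed.

Lemma PhiD_vbasis_sub V e (K : 'I_d -> C) : all (mem D) V -> 0 <= e ->
    (forall j, e * d%:R * \sum_(v <- V) `|c v j| ^+ 2 <= K j) ->
  PhiD D (fun X => \sum_j K j *: (adj (b j) *m X *m b j) - e *: phi_low V X).
Proof.
move=> + e_ge0; elim: V K => [|v V IHV] K /= VD K_ge.
  apply: PhiD_eq (PhiD_sum (index_enum 'I_d) (fun j =>
    PhiD_scale _ (PhiD_sq (vbasis_nth_mem j)))).
    by move=> X; rewrite /phi_low big_nil scaler0 subr0.
  by move=> j; apply: le_trans (K_ge j); rewrite big_nil mulr0.
case/andP: VD => vD VD.
pose K' j := K j - e * d%:R * `|c v j| ^+ 2.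
have K'_ge j : e * d%:R * \sum_(u <- V) `|c u j| ^+ 2 <= K' j.
  by rewrite lerBrDr; move: (K_ge j); rewrite big_cons mulrDr addrC.
apply: PhiD_eq (PhiD_add (IHV K' VD K'_ge) (PhiD_vbasis_sub_sq vD e_ge0)) => X.
under eq_bigr => j _ do rewrite -(subrK (e * d%:R * `|c v j| ^+ 2) (K j)) scalerDl.
by rewrite big_split /phi_low big_cons scalerDr opprD [- _ - _]addrC addrACA.
Qed.

Lemma PhiD_order_unit f : PhiD D f ->
  exists2 N, 0 <= N & forall e t, 0 <= e -> e * N <= t ->
    PhiD D (fun X => t *: phi_low (vbasis D) X - e *: f X).
Proof.
case=> V [VD fV]; pose w j := \sum_(v <- V) `|c v j| ^+ 2.
have w_ge0 j : 0 <= w j by rewrite sumr_ge0 // => v _; rewrite exprn_ge0.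
exists (d%:R * \sum_j w j) => [|e t e_ge0 eN_le].
  by rewrite mulr_ge0 ?ler0n ?sumr_ge0.
apply: PhiD_eq (PhiD_vbasis_sub (K := fun=> t) VD e_ge0 _) => [X | j].
  by rewrite fV scaler_sumr /phi_low (big_nth 0) big_mkord size_tuple.
apply: le_trans eN_le; rewrite -mulrA ler_wpM2l // ler_wpM2l ?ler0n //.
by rewrite (bigD1 j) //= lerDl sumr_ge0.
Qed.
End OrderUnit.

Lemma sigmaDE_interior_vbasis (C : numClosedFieldType) m n (D E : {vspace 'M[C]_(m, n)}) :
  interior_point (sigmaDE D E) (fun X => phi_low (vbasis D) X + phi_up (vbasis E) X).
Proof.
have vbasis_all (F : {vspace 'M[C]_(m, n)}) : all (mem F) (vbasis F).
  by apply/allP => v; apply: vbasis_mem.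
split.
  apply: (sigmaDE_add (f := phi_low (vbasis D)) (g := phi_up (vbasis E))) => //.
    by exists (vbasis D); split; first exact: vbasis_all.
  by exists (vbasis E); split; first exact: vbasis_all.
move=> y /sigmaDE_decomp [f [g [Df /PhiE_PhiD Eg yfg]]].
have [N1 N1_ge0 unitD] := PhiD_order_unit Df.
have [N2 N2_ge0 unitE] := PhiD_order_unit Eg.
pose M := 1 + N1 + N2.
have M_gt0 : 0 < M by rewrite /M -addrA (lt_le_trans ltr01) // lerDl addr_ge0.
pose e := M^-1; have e_ge0 : 0 <= e by rewrite invr_ge0 ltW.
have eN_le N : 0 <= N -> N <= M -> e * N <= 1 + e.
  move=> N_ge0 N_le; apply: (@le_trans _ _ 1); last by rewrite lerDl.
  by rewrite -(mulVf (lt0r_neq0 M_gt0)) ler_wpM2l.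
have N1_le : N1 <= M by rewrite /M -addrA addrCA lerDl addr_ge0.
have N2_le : N2 <= M by rewrite /M lerDr addr_ge0.
exists (1 + e); split; first by rewrite ltrDl invr_gt0.
apply: (sigmaDE_add (unitD e (1 + e) e_ge0 (eN_le _ N1_ge0 N1_le))
          (g := fun X => (1 + e) *: phi_up (vbasis E) X - e *: g X)).
  apply/PhiE_PhiD; apply: PhiD_eq (unitE e (1 + e) e_ge0 (eN_le _ N2_ge0 N2_le)) => X.
  by rewrite /phi_up trmxK.
move=> X; rewrite /comb yfg opprD addrA subrr add0r scaleNr !scalerDr opprD.
by rewrite addrC [RHS]addrACA.
Qed.

Section SeparablePairing.
Variables (C : numClosedFieldType) (m n : nat).

Lemma mul_adj_row k (x : 'rV[C]_k) : (x *m adj x) 0 0 = \sum_j `|x 0 j| ^+ 2.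
Proof. by rewrite mxE; apply: eq_bigr => j _; rewrite !mxE normCK. Qed.

Lemma adj_mul_col k (x : 'cV[C]_k) : (adj x *m x) 0 0 = \sum_i `|x i 0| ^+ 2.
Proof.
rewrite -{2}[x]adjK mul_adj_row; apply: eq_bigr => i _.
by rewrite !mxE norm_conjC.
Qed.

Lemma psd_mul_adj k (a : 'cV[C]_k) : psd (a *m adj a).
Proof.
move=> x; rewrite mulmxA -mulmxA -[adj a *m x]adjK adjM adjK mul_adj_row.
by rewrite sumr_ge0 // => j _; rewrite exprn_ge0.
Qed.

Lemma psd_mxtrace_ge0 k (X : 'M[C]_k) : psd X -> 0 <= \tr X.
Proof.
move=> psdX; rewrite sumr_ge0 // => i _; have := psdX (delta_mx i 0).
have -> : adj (delta_mx i 0 : 'cV[C]_k) = delta_mx 0 i.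
  by apply/matrixP => o l; rewrite !mxE rmorph_nat andbC.
by rewrite -rowE -colE !mxE.
Qed.

Definition trace_map : mapT C m n := fun X => \tr X *: 1%:M.

Lemma trace_map_P1 : P1 trace_map.
Proof.
split=> [c X Y | X psdX x].
  by rewrite /trace_map mxtraceD mxtraceZ scalerDl scalerA.
rewrite /trace_map -scalemxAr -scalemxAl mulmx1 mxE adj_mul_col.
by rewrite mulr_ge0 ?psd_mxtrace_ge0 ?sumr_ge0 // => i _; rewrite exprn_ge0.
Qed.

Lemma pairing_comb (A : blockT C m n) t (y x : mapT C m n) :
  pairing A (comb t y x) = (1 - t) * pairing A y + t * pairing A x.
Proof.
rewrite /pairing !mulr_sumr -big_split; apply: eq_bigr => i _.
rewrite !mulr_sumr -big_split; apply: eq_bigr => j _.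
by rewrite /comb linearD !linearZ /= mulmxDr -!scalemxAr mxtraceD !mxtraceZ.
Qed.

Lemma pairing_sum_scale I (r : seq I) (c : I -> C) (F : I -> blockT C m n) psi :
  pairing (\sum_(i <- r) map_mx (fun M => c i *: M) (F i)) psi =
  \sum_(i <- r) c i * pairing (F i) psi.
Proof.
elim: r => [|i r IHr].
  rewrite !big_nil; apply: big1 => k _; apply: big1 => l _.
  by rewrite mxE mul0mx mxtrace0.
rewrite !big_cons -IHr /pairing mulr_sumr -big_split; apply: eq_bigr => k _.
rewrite mulr_sumr -big_split; apply: eq_bigr => l _.
by rewrite !mxE mulmxDl mxtraceD -scalemxAl mxtraceZ.
Qed.

Lemma rank_le1_factor (z : 'M[C]_(m, n)) :
  (\rank z <= 1)%N -> exists (a : 'cV[C]_m) (b : 'rV[C]_n), z = a *m b.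
Proof.
rewrite leq_eqVlt ltnS leqn0; case/orP=> /eqP rk; rewrite -(mulmx_ebase z) rk; last first.
  by exists 0, 0; rewrite pid_mx_0 mulmx0 mul0mx mulmx0.
have m_gt0 : (0 < m)%N by rewrite -rk rank_leq_row.
have n_gt0 : (0 < n)%N by rewrite -rk rank_leq_col.
pose i0 := Ordinal m_gt0; pose j0 := Ordinal n_gt0.
exists (col_ebase z *m delta_mx i0 0), (delta_mx 0 j0 *m row_ebase z).
suff -> : pid_mx 1 = delta_mx i0 (0 : 'I_1) *m delta_mx 0 j0 :> 'M[C]_(m, n).
  by rewrite !mulmxA.
apply/matrixP => i j; rewrite mul_delta_mx !mxE.
by case: i j => [[|i] ?] [[|j] ?]; rewrite /= ?andbT ?andbF.
Qed.

Lemma ztilde_mul (a : 'cV[C]_m) (b : 'rV[C]_n) i j :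
  ztilde (a *m b) i j = (a i 0 * (a j 0)^*) *: (b^T *m adj b^T).
Proof.
have row_mul k : row k (a *m b) = a k 0 *: b.
  by apply/matrixP => o l; rewrite !mxE big_ord1 (ord1 o).
by rewrite mxE !row_mul !linearZ /= adjZ -scalemxAl -scalemxAr scalerA.
Qed.

Lemma pairing_ztilde_mul (a : 'cV[C]_m) (b : 'rV[C]_n) (psi : mapT C m n) : linear psi ->
  pairing (ztilde (a *m b)) psi = (b *m psi (a *m adj a) *m adj b) 0 0.
Proof.
move=> /(GRing.isLinear.Build _ _ _ _ psi) psi_lin.
pose L : {linear 'M[C]_m -> 'M[C]_n} := HB.pack psi psi_lin.
rewrite -[psi]/(L : 'M_m -> 'M_n).
transitivity (\tr (b^T *m adj b^T *m (L (a *m adj a))^T)).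
  rewrite [a *m adj a]matrix_sum_delta !linear_sum; apply: eq_bigr => i _.
  rewrite !linear_sum; apply: eq_bigr => j _.
  by rewrite ztilde_mul !linearZ /= -scalemxAl mxtraceZ mxE big_ord1 !mxE.
rewrite adj_trmx -!trmx_mul mxtrace_tr mulmxA mxtrace_mulC mulmxA.
by rewrite /mxtrace big_ord1.
Qed.

Lemma P1_pairing_ztilde_ge0 (a : 'cV[C]_m) (b : 'rV[C]_n) psi :
  P1 psi -> 0 <= pairing (ztilde (a *m b)) psi.
Proof.
by case=> lin pos; rewrite pairing_ztilde_mul // -{1}[b]adjK; apply/pos/psd_mul_adj.
Qed.

Lemma pairing_ztilde_trace (a : 'cV[C]_m) (b : 'rV[C]_n) :
  pairing (ztilde (a *m b)) trace_map = (\sum_i `|a i 0| ^+ 2) * \sum_j `|b 0 j| ^+ 2.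
Proof.
rewrite pairing_ztilde_mul; last by case: trace_map_P1.
rewrite /trace_map -scalemxAr -scalemxAl mulmx1 mxE mul_adj_row mxtrace_mulC.
by rewrite /mxtrace big_ord1 adj_mul_col.
Qed.

Lemma sum_sqr_norm_eq0 k (f : 'I_k -> C) : \sum_i `|f i| ^+ 2 = 0 -> forall i, f i = 0.
Proof.
move=> /psumr_eq0P sum_eq0 i.
have /eqP : `|f i| ^+ 2 = 0 by apply: sum_eq0 => // j _; rewrite exprn_ge0.
by rewrite expf_eq0 /= normr_eq0 => /eqP.
Qed.

Lemma V1_rank1_decomp (A : blockT C m n) : V1 A ->
  exists l : seq (C * ('cV[C]_m * 'rV[C]_n)), (forall p, p \in l -> 0 <= p.1) /\
    A = \sum_(p <- l) map_mx (fun M => p.1 *: M) (ztilde (p.2.1 *m p.2.2)).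
Proof.
case=> l [lV1 ->]; elim: l lV1 => [|[c z] l IHl] lV1.
  by exists [::]; split=> //; rewrite !big_nil.
have [c_ge0 /rank_le1_factor [a [b /= z_ab]]] := lV1 _ (or_introl erefl).
have [l' [l'_ge0 l_l']] := IHl (fun p lp => lV1 p (or_intror lp)).
exists ((c, (a, b)) :: l'); split; last by rewrite !big_cons l_l' z_ab.
by move=> p; rewrite inE => /predU1P [-> | /l'_ge0].
Qed.

Lemma V1_pairing_ge0 (A : blockT C m n) psi : V1 A -> P1 psi -> 0 <= pairing A psi.
Proof.
move=> /V1_rank1_decomp [l [l_ge0 ->]] P1psi.
rewrite pairing_sum_scale big_seq sumr_ge0 // => p lp.
by rewrite mulr_ge0 ?l_ge0 ?P1_pairing_ztilde_ge0.
Qed.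

Lemma V1_pairing_trace_gt0 (A : blockT C m n) : V1 A -> A != 0 -> 0 < pairing A trace_map.
Proof.
move=> V1A; rewrite lt_def V1_pairing_ge0 ?andbT //; last exact: trace_map_P1.
case/V1_rank1_decomp: V1A => l [l_ge0 ->]; apply: contraNneq => /eqP.
rewrite pairing_sum_scale big_seq psumr_eq0 => [/allP pairing_eq0|]; last first.
  by move=> p lp; rewrite mulr_ge0 ?l_ge0 ?(P1_pairing_ztilde_ge0 _ _ trace_map_P1).
apply/eqP; rewrite big_seq big1 // => -[c [a b]] lp; apply/matrixP => i j.
move: (pairing_eq0 _ lp).
rewrite lp /= pairing_ztilde_trace mxE ztilde_mul scalerA [RHS]mxE.
rewrite !mulf_eq0.
case/or3P=> [/eqP -> | /eqP/sum_sqr_norm_eq0 a_eq0 | /eqP/sum_sqr_norm_eq0 b_eq0].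
- by rewrite mul0r scale0r.
- by rewrite a_eq0 mul0r mulr0 scale0r.
- have -> : b = 0 by apply/rowP => k; rewrite b_eq0 mxE.
  by rewrite trmx0 mul0mx scaler0.
Qed.

End SeparablePairing.

Theorem theorem3p1 (R : realType) (m n : nat) (hm : (0 < m)%N) (hn : (0 < n)%N)
  (D E : {vspace 'M[R[i]]_(m, n)})
  (hface : proper_face (sigmaDE D E) (@Dec R[i] m n))
  (hint : forall phi : mapT R[i] m n,
      interior_point (sigmaDE D E) phi -> interior_point (@P1 R[i] m n) phi)
  (A : blockT R[i] m n) :
  dual_face (sigmaDE D E) A -> A != 0 -> Tcone A /\ ~ V1 A.
Proof.
move=> [TA A_perp] A_neq0; split=> // V1A.
have phi0_int := sigmaDE_interior_vbasis D E.
have [_ /(_ _ (trace_map_P1 _ _ _)) [t [t_gt1 P1_comb]]] := hint _ phi0_int.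
have := V1_pairing_ge0 V1A P1_comb.
rewrite pairing_comb (A_perp _ phi0_int.1) mulr0 addr0.
rewrite pmulr_lge0 ?V1_pairing_trace_gt0 // subr_ge0.
by move=> /(lt_le_trans t_gt1); rewrite ltxx.
Qed.
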